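(* Let $X$ be a Tychonoff space. If player II has a winning strategy in the game $\mathsf{G}_1(\Omega, \Omega)$ played on $X$, then $X_\delta$ is Lindelöf.
   Context: $\Omega$ is the collection of all open $\omega$-covers of $X$, i.e., open covers $\mathcal{C}$ such that every finite $F \subset X$ is contained in some member of $\mathcal{C}$ (here taken, as usual, with $X \notin \mathcal{C}$ not required). The game $\mathsf{G}_1(\Omega,\Omega)$ is played in innings $n \in \omega$: player I chooses $\mathcal{C}_n \in \Omega$, then player II chooses $C_n \in \mathcal{C}_n$; II wins iff $\{C_n : n \in \omega\} \in \Omega$. $X_\delta$, the $G_\delta$ modification of $X$, is the set $X$ with the topology generated by the $G_\delta$ subsets of $X$. *)

From HB Require Import structures.
From mathcomp Require Import all_boot all_order all_algebra.
From mathcomp Require Import all_classical all_reals all_analysis borel_hierarchy.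
Set Implicit Arguments. Unset Strict Implicit. Unset Printing Implicit Defensive.
Import Order.TTheory GRing.Theory Num.Theory.
Local Open Scope classical_set_scope.

(* Tychonoff = completely regular (library notion, urysohn.v) + T1
   (library [accessible_space]). *)
Definition tychonoff_space (X : topologicalType) : Prop :=
  completely_regular_space X /\ accessible_space X.

(* Open omega-covers of X: families of open sets such that every finite
   subset of X is contained in some member (X itself may be a member). *)
Definition omega_cover (X : topologicalType) (C : set (set X)) : Prop :=
  (forall U, C U -> open U) /\
  (forall F : set X, finite_set F -> exists2 U, C U & F `<=` U).

(* A strategy for player II in G_1(Omega, Omega): given the finite sequence
   of covers C_0, ..., C_n played so far by I, choose a set. *)
Definition II_strategy (X : topologicalType) := seq (set (set X)) -> set X.

Definition II_winning (X : topologicalType) (sigma : II_strategy X) : Prop :=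
  (forall (s : seq (set (set X))) (C : set (set X)),
      (forall i, (i < size s)%N -> omega_cover (nth set0 s i)) ->
      omega_cover C -> C (sigma (rcons s C))) /\
  (forall Cs : nat -> set (set X), (forall n, omega_cover (Cs n)) ->
      omega_cover (range (fun n => sigma [seq Cs i | i <- iota 0 n.+1]))).

Definition II_has_winning_strategy (X : topologicalType) : Prop :=
  exists sigma : II_strategy X, II_winning sigma.

(* The G_delta modification X_delta: the topology on (the points of) X
   generated by the G_delta subsets of X, i.e. its open sets are the unions
   of finite intersections of G_delta subsets of X. *)
Definition finite_Gdelta_inter (X : topologicalType) (B : set X) : Prop :=
  exists (n : nat) (H : 'I_n -> set X),
    (forall k, Gdelta (H k)) /\ B = \bigcap_(k in [set: 'I_n]) H k.

Definition delta_open (X : topologicalType) (A : set X) : Prop :=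
  exists G : set (set X),
    (forall B, G B -> finite_Gdelta_inter B) /\ A = \bigcup_(B in G) B.

Definition delta_lindelof (X : topologicalType) : Prop :=
  forall C : set (set X), (forall U, C U -> delta_open U) ->
    [set: X] `<=` \bigcup_(U in C) U ->
    exists2 D : set (set X), D `<=` C /\ countable D &
      [set: X] `<=` \bigcup_(U in D) U.

From mathcomp Require Import all_boot all_order all_algebra.
From mathcomp Require Import all_classical all_reals all_analysis.

(* At every position s of an
   omega-play there is a finite kernel K_s such that every open U containing
   K_s is II's answer to some omega-cover.  Given a cover of X by X_delta-open
   sets, attach to each y a member U_y of the cover and a decreasing sequence
   of open sets Q_y n with y in \bigcap_n Q_y n contained in U_y.  Forcing II
   to answer V s n = \bigcup_(y in K_s) Q_y n along a tree of positions
   indexed by seq nat, every x lies in \bigcap_n V s n for some node s (else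
   following branches avoiding x yields a play where II never covers x).  As
   K_s is finite and the Q_y decrease, x then lies in some U_y with y in K_s,
   so the countably many U_y with y in a kernel along the tree cover X. *)

Local Open Scope classical_set_scope.

Lemma bigcap_bigcup_nonincreasing {T : Type} {I : choiceType} {F : set I}
    {Q : I -> nat -> set T} :
  finite_set F -> (forall i, {homo Q i : n m / (n <= m)%N >-> (m `<=` n)}) ->
  \bigcap_n \bigcup_(i in F) Q i n `<=` \bigcup_(i in F) \bigcap_n Q i n.
Proof.
move=> finF Qdec x xQ; apply: contrapT => xNQ.
have : \forall n \near \oo, forall i, F i -> ~ Q i n x.
  rewrite -[F](fset_setK finF); apply: filter_bigI => i.
  rewrite in_fset_set// inE => Fi.
  have /existsNP[n nQ] : ~ (forall n, Q i n x).
    by move=> allQ; apply: xNQ; exists i => // n _; apply: allQ.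
  by exists n => // m /= nm mQ; apply: nQ; apply: Qdec mQ.
move=> [N _ NQ]; have [i Fi iQ] : (\bigcup_(i in F) Q i N) x by apply: xQ.
exact: NQ N (leqnn N) i Fi iQ.
Qed.

Section DeltaOpen.
Context {X : topologicalType}.

Lemma open_bigcap_finite (I : choiceType) (A : set I) (F : I -> set X) :
  finite_set A -> (forall i, open (F i)) -> open (\bigcap_(i in A) F i).
Proof.
move=> finA oF; rewrite -bigsetI_fset_set //.
by apply: (big_ind open) => //; [exact: openT | exact: openI].
Qed.

Lemma finite_Gdelta_inter_nonincreasing (B : set X) :
  finite_Gdelta_inter B -> exists Q : nat -> set X,
    [/\ forall n, open (Q n), {homo Q : n m / (n <= m)%N >-> (m `<=` n)}
      & B = \bigcap_n Q n].
Proof.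
move=> [m [H [GdH ->]]].
have /choice [Os HOs] : forall k : 'I_m, exists Os : nat -> set X,
    (forall i, open (Os i)) /\ H k = \bigcap_i Os i.
  by move=> k; have [Os oO eHk] := GdH k; exists Os.
exists (fun n => \bigcap_(k in [set: 'I_m]) \bigcap_(i in `I_n.+1) Os k i).
split.
- move=> n; apply: open_bigcap_finite; first exact: finite_finset.
  by move=> k; apply: open_bigcap_finite; [exact: finite_II | case: (HOs k)].
- move=> n p np z Qz k _ i /= ilt; apply: (Qz k I i) => /=.
  exact: leq_trans ilt _.
- apply/seteqP; split => z.
  + by move=> Hz n _ k _ i _; have := Hz k I; case: (HOs k) => _ ->; apply.
  + by move=> Qz k _; case: (HOs k) => _ -> i _; exact: (Qz i I k I i (ltnSn i)).
Qed.

Lemma delta_open_nbhs (U : set X) (y : X) : delta_open U -> U y ->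
  exists Q : nat -> set X,
    [/\ forall n, open (Q n), {homo Q : n m / (n <= m)%N >-> (m `<=` n)},
        forall n, Q n y & \bigcap_n Q n `<=` U].
Proof.
move=> [G [GB ->]] [B GBB By].
have /finite_Gdelta_inter_nonincreasing[Q [oQ Qdec eB]] := GB B GBB.
exists Q; split => //; first by move: By; rewrite eB => + n; apply.
by move=> z; rewrite -eB => Bz; exists B.
Qed.

Lemma delta_cover_refinement (C : set (set X)) :
  (forall U, C U -> delta_open U) -> [set: X] `<=` \bigcup_(U in C) U ->
  exists (U : X -> set X) (Q : X -> nat -> set X), forall y,
    [/\ C (U y), forall n, open (Q y n),
        {homo Q y : n m / (n <= m)%N >-> (m `<=` n)},
        forall n, Q y n y & \bigcap_n Q y n `<=` U y].
Proof.
move=> Cdelta Ccov.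
have /choice [U UP] : forall y, exists U, C U /\ U y.
  by move=> y; have [U CU Uy] := Ccov y I; exists U.
have /choice [Q QP] : forall y, exists Q : nat -> set X,
    [/\ forall n, open (Q n), {homo Q : n m / (n <= m)%N >-> (m `<=` n)},
        forall n, Q n y & \bigcap_n Q n `<=` U y].
  by move=> y; have [CU Uy] := UP y; exact: delta_open_nbhs (Cdelta _ CU) Uy.
by exists U, Q => y; have [? ?] := UP y; have [] := QP y.
Qed.
End DeltaOpen.

Section Strategy.
Context {X : topologicalType} (sigma : II_strategy X).

Definition omega_position (s : seq (set (set X))) :=
  forall i, (i < size s)%N -> omega_cover (nth set0 s i).

Lemma omega_position_rcons s C :
  omega_position s -> omega_cover C -> omega_position (rcons s C).
Proof.
move=> sP CP i; rewrite size_rcons ltnS leq_eqVlt nth_rcons.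
by case/orP => [/eqP->|lti]; rewrite ?ltnn ?eqxx ?lti //; apply: sP.
Qed.

Definition II_legal :=
  forall s C, omega_position s -> omega_cover C -> C (sigma (rcons s C)).

Hypothesis sigma_legal : II_legal.

(* Otherwise the open sets that II never answers at s would form an
   omega-cover, and II's legal answer to it would be one of them. *)
Lemma legal_strategy_kernel s : omega_position s ->
  exists2 F : set X, finite_set F & forall U, open U -> F `<=` U ->
    exists2 C, omega_cover C & sigma (rcons s C) = U.
Proof.
move=> sP; apply: contrapT => noF.
pose D := [set U : set X |
  open U /\ forall C, omega_cover C -> sigma (rcons s C) <> U].
have DP : omega_cover D.
  split=> [U []//|F finF]; apply: contrapT => noU.
  apply: noF; exists F => // U oU FU.
  apply: contrapT => noC; apply: noU; exists U => //; split => // C CP eU.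
  by apply: noC; exists C.
by have [_ noD] := sigma_legal s D sP DP; exact: noD D DP erefl.
Qed.

Lemma legal_strategy_responses :
  exists (K : seq (set (set X)) -> set X)
         (R : seq (set (set X)) -> set X -> set (set X)),
  forall s, omega_position s -> finite_set (K s) /\
    forall U, open U -> K s `<=` U ->
      omega_cover (R s U) /\ sigma (rcons s (R s U)) = U.
Proof.
have /choice[K KP] : forall s, exists F : set X, omega_position s ->
    finite_set F /\ forall U, open U -> F `<=` U ->
      exists2 C, omega_cover C & sigma (rcons s C) = U.
  move=> s; have [sP|] := pselect (omega_position s); last by exists set0.
  by have [F finF FP] := legal_strategy_kernel s sP; exists F.
have /choice[R RP] : forall sU : seq (set (set X)) * set X, exists C,
    [/\ omega_position sU.1, open sU.2 & K sU.1 `<=` sU.2] ->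
    omega_cover C /\ sigma (rcons sU.1 C) = sU.2.
  move=> [s U] /=.
  have [[sP oU KU]|] := pselect [/\ omega_position s, open U & K s `<=` U];
    last by exists set0.
  by have [C CP eU] := (KP s sP).2 U oU KU; exists C.
exists K, (fun s U => R (s, U)) => s sP; split; first exact: (KP s sP).1.
by move=> U oU KU; apply: (RP (s, U)).
Qed.

End Strategy.

Section StrategyTree.
Context {X : topologicalType} (sigma : II_strategy X).
Variables (move : seq (set (set X)) -> nat -> set (set X))
          (V : seq (set (set X)) -> nat -> set X).
Hypothesis move_answer : forall s n, omega_position s ->
  omega_cover (move s n) /\ sigma (rcons s (move s n)) = V s n.

Definition tree_position (t : seq nat) : seq (set (set X)) :=
  foldl (fun s n => rcons s (move s n)) [::] t.

Lemma tree_position_rcons t n :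
  tree_position (rcons t n) =
  rcons (tree_position t) (move (tree_position t) n).
Proof. by rewrite /tree_position foldl_rcons. Qed.

Lemma omega_tree_position t : omega_position (tree_position t).
Proof.
elim/last_ind: t => [|t n IH]; first by case.
rewrite tree_position_rcons.
exact: omega_position_rcons IH (move_answer _ n IH).1.
Qed.

(* Otherwise, choosing at each node t a branch n with x outside V t n gives a
   play of I in which all of II's answers miss x, so they do not cover [x]. *)
Lemma winning_tree_exhausts : II_winning sigma ->
  forall x, exists t, forall n, V (tree_position t) n x.
Proof.
move=> [_ win] x; apply: contrapT => /forallNP noV.
have /choice[g gP] : forall t, exists n, ~ V (tree_position t) n x.
  by move=> t; apply/existsNP/noV.
pose branch k := iter k (fun t => rcons t (g t)) [::].
pose Cs k := move (tree_position (branch k)) (g (branch k)).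
have CsE k : tree_position (branch k) = [seq Cs i | i <- iota 0 k].
  elim: k => [//|k IH].
  by rewrite /branch iterS -/(branch k) tree_position_rcons -/(Cs k) IH
    -addn1 iotaD map_cat cats1.
have CsP k : omega_cover (Cs k).
  exact: (move_answer _ _ (omega_tree_position _)).1.
have [_ /(_ [set x] (finite_set1 x))[_ [n _ <-] /(_ x erefl)]] := win Cs CsP.
rewrite -CsE /branch iterS -/(branch n) tree_position_rcons.
by rewrite (move_answer _ _ (omega_tree_position _)).2; apply: gP.
Qed.

End StrategyTree.

Arguments omega_tree_position {X sigma move V} move_answer t.
Arguments winning_tree_exhausts {X sigma move V} move_answer.

Theorem proposition3p5 (X : topologicalType) :
  tychonoff_space X -> II_has_winning_strategy X -> delta_lindelof X.
Proof.
move=> _ [sigma win] C Cdelta Ccov.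
have [U [Q UQ]] := delta_cover_refinement C Cdelta Ccov.
have [K [R KR]] := legal_strategy_responses sigma win.1.
pose V s n := \bigcup_(y in K s) Q y n.
pose move s n := R s (V s n).
have move_answer s n : omega_position s ->
    omega_cover (move s n) /\ sigma (rcons s (move s n)) = V s n.
  move=> sP; apply: (KR s sP).2.
  - by apply: bigcup_open => y _; have [] := UQ y.
  - by move=> y Ky; exists y => //; have [] := UQ y.
have K_finite t : finite_set (K (tree_position move t)).
  exact: (KR _ (omega_tree_position move_answer t)).1.
exists (\bigcup_t U @` K (tree_position move t)).
  split; first by move=> _ [t _ [y _ <-]]; have [] := UQ y.
  apply: bigcup_countable => [|t _]; first exact: countableP.
  exact/finite_set_countable/finite_image.
move=> x _; have [t xV] := winning_tree_exhausts move_answer win x.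
have Q_nonincreasing y : {homo Q y : n m / (n <= m)%N >-> (m `<=` n)}.
  by have [] := UQ y.
have [y Ky xQ] := bigcap_bigcup_nonincreasing (K_finite t) Q_nonincreasing
  x (fun n _ => xV n).
exists (U y); first by exists t => //; exists y.
by have [_ _ _ _] := UQ y; apply.
Qed.
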